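(* Let $H$ be a Hilbert space and $U_{ik}\in B(H)$, $i,k=1,\dots,n$, operators satisfying relations (R1)–(R5). Let $P_{ik}=U_{ik}^*U_{ik}$ and, for $\sigma\in S_n$, $P_\sigma=P_{1,\sigma^{-1}(1)}P_{2,\sigma^{-1}(2)}\cdots P_{n,\sigma^{-1}(n)}$. Then the projections $P_\sigma$, $\sigma\in S_n$, are central in the C*-algebra generated by $\{U_{ik}\}$ and form a resolution of the identity: $\sum_{\sigma\in S_n}P_\sigma=1$.
   Context: $n\ge2$, $\theta\in M_n(\mathbb R)$ skew-symmetric, $\omega_{ij}=e^{2\pi i\theta_{ij}}$. Relations, for all $i,j,k,l\in\{1,\dots,n\}$: (R1) $U_{ik}U_{jl}+\omega_{ji}U_{jk}U_{il}=\omega_{kl}U_{il}U_{jk}+\omega_{ji}\omega_{kl}U_{jl}U_{ik}$; (R2) $\sum_iU_{ik}U_{il}^*=\delta_{kl}1$; (R3) $\sum_iU_{il}^*U_{ik}=\delta_{kl}1$; (R4) $U_{jk}U_{ik}^*=0$ for $i\neq j$; (R5) $U_{ik}^*U_{jk}=0$ for $i\neq j$. *)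

From HB Require Import structures.
From mathcomp Require Import all_boot all_order all_algebra all_fingroup.
From mathcomp Require Import reals trigo.
From mathcomp.real_closed Require Import complex.
Set Implicit Arguments. Unset Strict Implicit. Unset Printing Implicit Defensive.
Import Order.TTheory GRing.Theory Num.Theory.
Local Open Scope ring_scope.

Definition expi (R : realType) (t : R) : R[i] := Complex (cos t) (sin t).

Definition omega (R : realType) (n : nat) (theta : 'M[R]_n) (i j : 'I_n) : R[i] :=
  expi (2 * pi * theta i j).

Definition is_inner_product (R : realType) (V : lmodType R[i]) (ip : V -> V -> R[i]) :=
  [/\ forall (a : R[i]) (x y z : V), ip (a *: x + y) z = a * ip x z + ip y z,
      forall x y : V, ip y x = conjc (ip x y)
    & forall x : V, x != 0 -> 0 < ip x x].

Definition sqnorm (R : realType) (V : lmodType R[i]) (ip : V -> V -> R[i]) (x : V) : R[i] :=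
  `| ip x x |.

Definition ip_complete (R : realType) (V : lmodType R[i]) (ip : V -> V -> R[i]) :=
  forall u : nat -> V,
    (forall e : R, 0 < e -> exists N : nat, forall m k : nat,
        (N <= m)%N -> (N <= k)%N -> sqnorm ip (u m - u k) < Complex e 0) ->
    exists l : V, forall e : R, 0 < e -> exists N : nat, forall m : nat,
        (N <= m)%N -> sqnorm ip (u m - l) < Complex e 0.

Definition is_hilbert (R : realType) (V : lmodType R[i]) (ip : V -> V -> R[i]) :=
  is_inner_product ip /\ ip_complete ip.

Definition bounded_op (R : realType) (V : lmodType R[i]) (ip : V -> V -> R[i])
  (T : {linear V -> V}) :=
  exists M : R, forall x : V, sqnorm ip (T x) <= Complex (M ^+ 2) 0 * sqnorm ip x.

Definition is_adjoint (R : realType) (V : lmodType R[i]) (ip : V -> V -> R[i])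
  (T Ts : {linear V -> V}) :=
  forall x y : V, ip (T x) y = ip x (Ts y).

Definition Psigma (R : realType) (V : lmodType R[i]) (n : nat)
  (U Us : 'I_n -> 'I_n -> {linear V -> V}) (s : 'S_n) (x : V) : V :=
  foldr (fun (i : 'I_n) (y : V) => Us i (s^-1%g i) (U i (s^-1%g i) y)) x (enum 'I_n).

(* The P_ik = U_ik^* U_ik are orthogonal projections. By (R2)-(R5), the
   projections in one column are mutually orthogonal and, by (R3), sum to 1;
   those in one row are mutually orthogonal too, so each row sum S_i is a
   projection, and since sum_i (1 - S_i) = n - n = 0 with every 1 - S_i
   positive, each row also sums to 1. Compressing (R1) by the U_ik shows that
   P_ik commutes with every U_jl, hence with every U_jl^*, so all the P_ik
   commute. Expanding 1 = prod_i sum_k P_ik over the maps f from rows to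
   columns, the terms of non-injective f vanish by column orthogonality, and
   the injective f are the permutations. *)

From HB Require Import structures.
From mathcomp Require Import all_boot all_order all_algebra all_fingroup.
From mathcomp Require Import reals trigo.
From mathcomp.real_closed Require Import complex.
From Stdlib Require Import FunctionalExtensionality ProofIrrelevance.
Import Order.TTheory GRing.Theory Num.Theory.
Set Implicit Arguments.
Unset Strict Implicit.
Unset Printing Implicit Defensive.
Local Open Scope ring_scope.

Section FoldrCommuting.
Variables (I W : Type) (f : I -> W -> W).

Lemma foldr_commute (T : W -> W) r x :
  (forall a y, f a (T y) = T (f a y)) -> foldr f (T x) r = T (foldr f x r).
Proof. by move=> fT; elim: r => //= a r ->; rewrite fT. Qed.

Hypothesis f_comm : forall a b y, f a (f b y) = f b (f a y).

Lemma foldr_idem r x :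
  (forall a y, f a (f a y) = f a y) -> foldr f (foldr f x r) r = foldr f x r.
Proof.
move=> f_idem; elim: r => //= a r IHr.
by rewrite (@foldr_commute (f a)) ?f_idem ?IHr // => b y; rewrite f_comm.
Qed.

Lemma foldr_adjoint (C : Type) (form : W -> W -> C) r x y :
  (forall a u v, form (f a u) v = form u (f a v)) ->
  form (foldr f x r) y = form x (foldr f y r).
Proof.
move=> f_adj; elim: r x y => //= a r IHr x y.
by rewrite f_adj IHr (@foldr_commute (f a)) // => b z; rewrite f_comm.
Qed.

End FoldrCommuting.

Lemma foldr_rem (I : eqType) (W : Type) (f : I -> W -> W) r x j : j \in r ->
  (forall a y, f j (f a y) = f a (f j y)) -> foldr f x r = f j (foldr f x (rem j r)).
Proof.
move=> + f_comm; elim: r => //= a r IHr; rewrite inE eq_sym.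
by have [->|_ /= /IHr->] := eqVneq j a; rewrite ?f_comm.
Qed.

Lemma foldr_eq0 (I : eqType) (W : zmodType) (f : I -> W -> W) r x a b :
  uniq r -> a \in r -> b \in r -> a != b ->
  (forall c d y, f c (f d y) = f d (f c y)) ->
  (forall y, f a (f b y) = 0) -> (forall c, f c 0 = 0) -> foldr f x r = 0.
Proof.
move=> r_uniq ar br ab f_comm fab f0.
have br' : b \in rem a r by rewrite mem_rem_uniq // inE eq_sym ab.
by rewrite (foldr_rem _ ar) // (foldr_rem _ br') // fab f0.
Qed.

(* Additive endomorphisms form a semiring under pointwise sum and composition,
   which is what [bigA_distr_bigA] needs to expand a composite of sums. *)
Section AdditiveEndomorphisms.
Variable V : zmodType.

Definition addEnd := {f : V -> V | {morph f : x y / x + y}}.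
Definition AddEnd f fD : addEnd := exist (fun f => {morph f : x y / x + y}) f fD.

Lemma addEnd_eq (f g : addEnd) : sval f =1 sval g -> f = g.
Proof.
case: f g => [f fD] [g gD] /= /functional_extensionality fg; subst g.
by rewrite (proof_irrelevance _ fD gD).
Qed.

Fact addEnd0_subproof : {morph (fun _ : V => 0 : V) : x y / x + y}.
Proof. by move=> x y; rewrite addr0. Qed.
Definition addEnd0 : addEnd := AddEnd addEnd0_subproof.
Definition addEnd1 : addEnd := AddEnd (fun x y => erefl : id (x + y) = x + y).

Fact addEnd_add_subproof (f g : addEnd) :
  {morph (fun x => sval f x + sval g x) : x y / x + y}.
Proof. by move=> x y /=; rewrite (svalP f) (svalP g) addrACA. Qed.
Definition addEnd_add f g : addEnd := AddEnd (addEnd_add_subproof f g).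

Fact addEnd_comp_subproof (f g : addEnd) : {morph sval f \o sval g : x y / x + y}.
Proof. by move=> x y /=; rewrite (svalP g) (svalP f). Qed.
Definition addEnd_comp f g : addEnd := AddEnd (addEnd_comp_subproof f g).

Lemma addEnd_val0 (f : addEnd) : sval f 0 = 0.
Proof. by apply: (@addrI _ (sval f 0)); rewrite -(svalP f) !addr0. Qed.

Lemma addEnd_addA : associative addEnd_add.
Proof. by move=> f g h; apply: addEnd_eq => x /=; rewrite addrA. Qed.
Lemma addEnd_addC : commutative addEnd_add.
Proof. by move=> f g; apply: addEnd_eq => x /=; rewrite addrC. Qed.
Lemma addEnd_add0 : left_id addEnd0 addEnd_add.
Proof. by move=> f; apply: addEnd_eq => x /=; rewrite add0r. Qed.
Lemma addEnd_comp0 : left_zero addEnd0 addEnd_comp.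
Proof. by move=> f; apply: addEnd_eq. Qed.
Lemma addEnd_compr0 : right_zero addEnd0 addEnd_comp.
Proof. by move=> f; apply: addEnd_eq => x /=; rewrite addEnd_val0. Qed.
Lemma addEnd_compDl : left_distributive addEnd_comp addEnd_add.
Proof. by move=> f g h; apply: addEnd_eq. Qed.
Lemma addEnd_compDr : right_distributive addEnd_comp addEnd_add.
Proof. by move=> f g h; apply: addEnd_eq => x /=; rewrite (svalP f). Qed.

HB.instance Definition _ :=
  Monoid.isComLaw.Build addEnd addEnd0 addEnd_add addEnd_addA addEnd_addC addEnd_add0.
HB.instance Definition _ :=
  Monoid.isMulLaw.Build addEnd addEnd0 addEnd_comp addEnd_comp0 addEnd_compr0.
HB.instance Definition _ :=
  Monoid.isAddLaw.Build addEnd addEnd_comp addEnd_add addEnd_compDl addEnd_compDr.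

Lemma addEnd_sumE (I : Type) (r : seq I) (F : I -> addEnd) x :
  sval (\big[addEnd_add/addEnd0]_(i <- r) F i) x = \sum_(i <- r) sval (F i) x.
Proof. by elim: r => [|a r IHr]; rewrite ?big_nil ?big_cons //= IHr. Qed.

Lemma addEnd_prodE (I : Type) (r : seq I) (F : I -> addEnd) x :
  sval (\big[addEnd_comp/addEnd1]_(i <- r) F i) x = foldr (fun i => sval (F i)) x r.
Proof. by elim: r => [|a r IHr]; rewrite ?big_nil ?big_cons //= IHr. Qed.

Lemma foldr_sum_distr (I J : finType) (F : I -> J -> V -> V) x :
  (forall i j, {morph F i j : y z / y + z}) ->
  foldr (fun i y => \sum_j F i j y) x (enum I)
  = \sum_(f : {ffun I -> J}) foldr (fun i => F i (f i)) x (enum I).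
Proof.
move=> FD; pose G i j := AddEnd (FD i j).
have -> : enum I = index_enum I by rewrite enumT [index_enum I]unlock.
have := congr1 (sval^~ x) (@bigA_distr_bigA _ _ addEnd1 addEnd_comp addEnd_add _ _ G).
rewrite addEnd_prodE addEnd_sumE.
under [in RHS]eq_bigr do rewrite addEnd_prodE.
by move=> <-; elim: (index_enum I) => //= i r ->; rewrite addEnd_sumE.
Qed.

End AdditiveEndomorphisms.

Lemma sum_injective_ffun (T : finType) (M : nmodType) (F : {ffun T -> T} -> M) :
  \sum_(f : {ffun T -> T} | injectiveb f) F f = \sum_(s : {perm T}) F (pval s).
Proof.
rewrite (reindex_omap (@pval T) insub) => [|f f_inj]; last by rewrite insubT.
by apply: eq_bigl => s; rewrite (valP s) valK eqxx.
Qed.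

Section InnerProduct.
Variables (R : realType) (V : lmodType R[i]) (ip : V -> V -> R[i]).
Hypothesis ip_inner : is_inner_product ip.

Lemma ipDl x y z : ip (x + y) z = ip x z + ip y z.
Proof. by case: ip_inner => linl _ _; have := linl 1 x y z; rewrite scale1r mul1r. Qed.

Lemma ip0l z : ip 0 z = 0.
Proof. by apply: (@addrI _ (ip 0 z)); rewrite -ipDl !addr0. Qed.

Lemma ipBl x y z : ip (x - y) z = ip x z - ip y z.
Proof.
case: ip_inner => linl _ _.
by rewrite addrC -scaleN1r linl mulN1r addrC.
Qed.

Lemma ip_suml (I : Type) (r : seq I) (F : I -> V) z :
  ip (\sum_(i <- r) F i) z = \sum_(i <- r) ip (F i) z.
Proof. exact: (big_morph (ip^~ z) (fun x y => ipDl x y z) (ip0l z)). Qed.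

Lemma ip_conj x y : ip y x = conjc (ip x y).
Proof. by case: ip_inner. Qed.

Lemma ipDr x y z : ip z (x + y) = ip z x + ip z y.
Proof. by rewrite !(ip_conj _ z) ipDl; apply: rmorphD. Qed.

Lemma ip0r z : ip z 0 = 0.
Proof. by rewrite ip_conj ip0l conjc0. Qed.

Lemma ip_sumr (I : Type) (r : seq I) (F : I -> V) z :
  ip z (\sum_(i <- r) F i) = \sum_(i <- r) ip z (F i).
Proof. exact: (big_morph (ip z) (fun x y => ipDr x y z) (ip0r z)). Qed.

Lemma ipBr x y z : ip z (x - y) = ip z x - ip z y.
Proof. by rewrite !(ip_conj _ z) ipBl; apply: rmorphB. Qed.

Lemma ip_ge0 x : 0 <= ip x x.
Proof.
case: ip_inner => _ _ pos; have [->|/pos/ltW //] := eqVneq x 0.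
by rewrite ip0l.
Qed.

Lemma ip_eq0 x : ip x x = 0 -> x = 0.
Proof.
case: ip_inner => _ _ pos ipx0; apply/eqP.
by apply: contraTT isT => /pos; rewrite ipx0 ltxx.
Qed.

Lemma ip_inj u v : (forall y, ip y u = ip y v) -> u = v.
Proof.
by move=> uv; apply/eqP; rewrite -subr_eq0; apply/eqP/ip_eq0; rewrite ipBr uv subrr.
Qed.

Lemma ip_compl_proj x (S : V -> V) :
  (forall y, S (S y) = S y) -> (forall y z, ip (S y) z = ip y (S z)) ->
  ip (x - S x) (x - S x) = ip (x - S x) x.
Proof.
by move=> S_idem S_adj; rewrite ipBr [X in _ - X]ipBl S_adj S_idem subrr subr0.
Qed.

Lemma proj_fix_of_sum_compl_eq0 (I : finType) (S : I -> V -> V) x :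
  (forall i y, S i (S i y) = S i y) -> (forall i y z, ip (S i y) z = ip y (S i z)) ->
  \sum_i (x - S i x) = 0 -> forall i, S i x = x.
Proof.
move=> S_idem S_adj sum0 i.
have norms_sum0 : \sum_i ip (x - S i x) (x - S i x) = 0.
  by under eq_bigr do rewrite ip_compl_proj //; rewrite -ip_suml sum0 ip0l.
have := psumr_eq0P (fun j _ => ip_ge0 (x - S j x)) norms_sum0 (i := i) isT.
by move/ip_eq0/eqP; rewrite subr_eq0 => /eqP.
Qed.

End InnerProduct.

Lemma omega_diag (R : realType) (n : nat) (theta : 'M[R]_n) i :
  theta^T = - theta -> omega theta i i = 1.
Proof.
move=> /matrixP/(_ i i); rewrite !mxE => /eqP; rewrite eq_sym eqNr => /eqP th0.
by rewrite /omega th0 /expi mulr0 cos0 sin0.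
Qed.

Section Relations.
Variables (R : realType) (V : lmodType R[i]) (ip : V -> V -> R[i]).
Variables (n : nat) (theta : 'M[R]_n) (U Us : 'I_n -> 'I_n -> {linear V -> V}).
Hypothesis ip_inner : is_inner_product ip.
Hypothesis theta_skew : theta^T = - theta.
Hypothesis U_adj : forall i k, is_adjoint ip (U i k) (Us i k).
Hypothesis R1 : forall i j k l (x : V),
  U i k (U j l x) + omega theta j i *: U j k (U i l x)
  = omega theta k l *: U i l (U j k x)
    + (omega theta j i * omega theta k l) *: U j l (U i k x).
Hypothesis R2 : forall k l (x : V), \sum_i U i k (Us i l x) = if k == l then x else 0.
Hypothesis R3 : forall k l (x : V), \sum_i Us i l (U i k x) = if k == l then x else 0.
Hypothesis R4 : forall i j k (x : V), i != j -> U j k (Us i k x) = 0.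
Hypothesis R5 : forall i j k (x : V), i != j -> Us i k (U j k x) = 0.

Lemma Us_adj i k x y : ip (Us i k x) y = ip x (U i k y).
Proof. by rewrite (ip_conj ip_inner) -U_adj -(ip_conj ip_inner). Qed.

Lemma UUsU i k x : U i k (Us i k (U i k x)) = U i k x.
Proof.
have := R2 k k (U i k x); rewrite eqxx (bigD1 i) //= big1 ?addr0 // => j ji.
by rewrite R5 // linear0.
Qed.

Lemma UsUUs i k x : Us i k (U i k (Us i k x)) = Us i k x.
Proof.
have := R2 k k x; rewrite eqxx => {2}<-.
rewrite linear_sum (bigD1 i) //= big1 ?addr0 // => j ji.
by rewrite R5 // eq_sym.
Qed.

Lemma UsU_eq0 i k l x : k != l -> Us i l (U i k x) = 0.
Proof.
move=> kl; suff UUsU0 : U i l (Us i l (U i k x)) = 0 by rewrite -UsUUs UUsU0 linear0.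
have := congr1 (U i l) (R3 k l x); rewrite (negbTE kl) linear_sum linear0.
by rewrite (bigD1 i) //= big1 ?addr0 // => j ji; rewrite R4.
Qed.

Lemma UUs_eq0 i k l x : k != l -> U i k (Us i l x) = 0.
Proof.
move=> kl; suff UsUUs0 : Us i k (U i k (Us i l x)) = 0 by rewrite -UUsU UsUUs0 linear0.
have := congr1 (Us i k) (R2 k l x); rewrite (negbTE kl) linear_sum linear0.
by rewrite (bigD1 i) //= big1 ?addr0 // => j ji; rewrite R5 // eq_sym.
Qed.

Lemma UU_eq0 i k l x : k != l -> U i k (U i l x) = 0.
Proof.
move=> kl; suff UsUU0 : Us i k (U i k (U i l x)) = 0 by rewrite -UUsU UsUU0 linear0.
have lk : l != k by rewrite eq_sym.
have := congr1 (Us i k) (R1 i i k l x).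
rewrite omega_diag // scale1r mul1r !linearD !linearZ /= !(UsU_eq0 _ _ lk) scaler0 addr0.
by move/eqP; rewrite -mulr2n -scaler_nat scaler_eq0 pnatr_eq0 => /eqP.
Qed.

Let P i k x := Us i k (U i k x).

Lemma P_additive i k : {morph P i k : x y / x + y}.
Proof. by move=> x y; rewrite /P !linearD. Qed.

Lemma P_sum i k (I : Type) (r : seq I) (F : I -> V) :
  P i k (\sum_(j <- r) F j) = \sum_(j <- r) P i k (F j).
Proof. by rewrite /P !linear_sum. Qed.

Lemma P_idem i k x : P i k (P i k x) = P i k x.
Proof. by rewrite /P UUsU. Qed.

Lemma P_adj i k x y : ip (P i k x) y = ip x (P i k y).
Proof. by rewrite Us_adj U_adj. Qed.

Lemma P_row_orth i k l x : k != l -> P i k (P i l x) = 0.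
Proof. by move=> kl; rewrite /P UUs_eq0 // linear0. Qed.

Lemma P_col_orth i j k x : i != j -> P i k (P j k x) = 0.
Proof. by move=> ij; rewrite /P R4 ?linear0 // eq_sym. Qed.

Lemma P_row_sum i x : \sum_k P i k x = x.
Proof.
pose S j y := \sum_k P j k y.
have S_idem j y : S j (S j y) = S j y.
  apply: eq_bigr => k _; rewrite P_sum (bigD1 k) //= P_idem big1 ?addr0 // => l lk.
  by rewrite P_row_orth // eq_sym.
have S_adj j y z : ip (S j y) z = ip y (S j z).
  by rewrite ip_suml // ip_sumr //; apply: eq_bigr => k _; apply: P_adj.
apply: (proj_fix_of_sum_compl_eq0 ip_inner S_idem S_adj).
(* summing (R3) over the columns gives n x on both sides *)
rewrite sumrB /S exchange_big /=.
by under [X in _ - X]eq_bigr do rewrite R3 eqxx; rewrite subrr.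
Qed.

Lemma P_U i k x : P i k (U i k x) = U i k x.
Proof.
rewrite -[RHS](P_row_sum i) (bigD1 k) //= big1 ?addr0 // => l lk.
by rewrite /P UU_eq0 ?linear0.
Qed.

Lemma P_UUs i k x : P i k x = U i k (Us i k x).
Proof.
have := R2 k k x; rewrite eqxx => {1}<-.
rewrite P_sum (bigD1 i) //= P_U big1 ?addr0 // => j ji.
by rewrite -(P_U j) /P R4 ?linear0.
Qed.

Lemma P_U_comm_offdiag i j k l x : i != j -> k != l ->
  P i k (U j l x) = U j l (P i k x).
Proof.
move=> ij kl; have ji : j != i by rewrite eq_sym.
have lk : l != k by rewrite eq_sym.
(* Compressing (R1) by [Us i k], resp. evaluating it at [Us i k x], leaves a
   single term on each side. *)
pose c := omega theta j i * omega theta k l.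
have P_UU y : P i k (U j l y) = c *: Us i k (U j l (U i k y)).
  have := congr1 (Us i k) (R1 i j k l y).
  by rewrite !linearD !linearZ /= (R5 _ _ ij) (UsU_eq0 _ _ lk) !scaler0 addr0 add0r.
have UP_UU :
    U j l (P i k x) = omega theta i j * omega theta l k *: U i k (U j l (Us i k x)).
  have := R1 j i l k (Us i k x).
  by rewrite (R4 _ _ ij) (UUs_eq0 _ _ lk) !linear0 addr0 add0r P_UUs.
have P_UP : P i k (U j l x) = P i k (U j l (P i k x)) by rewrite !P_UU [P i k x]/P UUsU.
by rewrite P_UP UP_UU /P !linearZ /= -/(P i k _) P_U.
Qed.

Lemma P_U_comm i j k l x : P i k (U j l x) = U j l (P i k x).
Proof.
have [<-|ij] := eqVneq i j; have [<-|kl] := eqVneq k l.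
- by rewrite P_U /P UUsU.
- have lk : l != k by rewrite eq_sym.
  by rewrite /P (UU_eq0 _ _ kl) (UUs_eq0 _ _ lk) !linear0.
- by rewrite P_UUs (R5 _ _ ij) /P (R4 _ _ ij) !linear0.
- exact: P_U_comm_offdiag.
Qed.

Lemma P_Us_comm i j k l x : P i k (Us j l x) = Us j l (P i k x).
Proof.
apply: (ip_inj ip_inner) => y.
by rewrite -P_adj -U_adj -P_U_comm P_adj U_adj.
Qed.

Lemma P_comm i j k l x : P i k (P j l x) = P j l (P i k x).
Proof. by rewrite [P j l x]/P P_Us_comm P_U_comm. Qed.

Lemma PsigmaE s x : Psigma U Us s x = foldr (fun i => P i (s^-1%g i)) x (enum 'I_n).
Proof. by []. Qed.

Lemma Psigma_idem s x : Psigma U Us s (Psigma U Us s x) = Psigma U Us s x.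
Proof. by rewrite !PsigmaE; apply: foldr_idem => *; [apply: P_comm | apply: P_idem]. Qed.

Lemma Psigma_adj s x y : ip (Psigma U Us s x) y = ip x (Psigma U Us s y).
Proof. by rewrite !PsigmaE; apply: foldr_adjoint => *; [apply: P_comm | apply: P_adj]. Qed.

Lemma Psigma_U_comm s i k x : Psigma U Us s (U i k x) = U i k (Psigma U Us s x).
Proof. by rewrite !PsigmaE foldr_commute // => *; rewrite P_U_comm. Qed.

Lemma Psigma_Us_comm s i k x : Psigma U Us s (Us i k x) = Us i k (Psigma U Us s x).
Proof. by rewrite !PsigmaE foldr_commute // => *; rewrite P_Us_comm. Qed.

Lemma sum_Psigma x : \sum_(s : 'S_n) Psigma U Us s x = x.
Proof.
have prod_row_sums : foldr (fun i y => \sum_k P i k y) x (enum 'I_n) = x.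
  by elim: (enum _) => //= i r ->; apply: P_row_sum.
rewrite -[RHS]prod_row_sums (foldr_sum_distr x P_additive).
rewrite (bigID (fun f : {ffun 'I_n -> 'I_n} => injectiveb f)) /=.
rewrite [X in _ = _ + X]big1 ?addr0 => [|f /injectivePn [a [b ab fab]]]; last first.
  have in_enum c : c \in enum 'I_n by rewrite mem_enum.
  apply: (@foldr_eq0 _ V _ _ x a b (enum_uniq _) (in_enum a) (in_enum b) ab).
  - by move=> *; apply: P_comm.
  - by move=> y; rewrite fab P_col_orth.
  - by move=> c; rewrite /P !linear0.
rewrite sum_injective_ffun (reindex_inj invg_inj) /=.
by apply: eq_bigr => s _; rewrite PsigmaE invgK -pvalE.
Qed.

End Relations.

Theorem proposition3p19 (R : realType) (V : lmodType R[i]) (ip : V -> V -> R[i])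
  (n : nat) (theta : 'M[R]_n) (U Us : 'I_n -> 'I_n -> {linear V -> V}) :
  is_hilbert ip ->
  (2 <= n)%N ->
  theta^T = - theta ->
  (forall i k, bounded_op ip (U i k)) ->
  (forall i k, is_adjoint ip (U i k) (Us i k)) ->
  (* (R1) *)
  (forall i j k l (x : V),
     U i k (U j l x) + omega theta j i *: U j k (U i l x)
     = omega theta k l *: U i l (U j k x)
       + (omega theta j i * omega theta k l) *: U j l (U i k x)) ->
  (* (R2) *)
  (forall k l (x : V), \sum_i U i k (Us i l x) = if k == l then x else 0) ->
  (* (R3) *)
  (forall k l (x : V), \sum_i Us i l (U i k x) = if k == l then x else 0) ->
  (* (R4) *)
  (forall i j k (x : V), i != j -> U j k (Us i k x) = 0) ->
  (* (R5) *)
  (forall i j k (x : V), i != j -> Us i k (U j k x) = 0) ->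
  (forall s : 'S_n,
     (* P_sigma is an orthogonal projection *)
     (forall x, Psigma U Us s (Psigma U Us s x) = Psigma U Us s x) /\
     (forall x y, ip (Psigma U Us s x) y = ip x (Psigma U Us s y)) /\
     (* P_sigma commutes with the generators U_ik and their adjoints *)
     (forall i k (x : V), Psigma U Us s (U i k x) = U i k (Psigma U Us s x)
                       /\ Psigma U Us s (Us i k x) = Us i k (Psigma U Us s x))) /\
  (* resolution of the identity *)
  (forall x : V, \sum_(s : 'S_n) Psigma U Us s x = x).
Proof.
move=> [ip_inner _] _ skew _ adj R1 R2 R3 R4 R5.
split=> [s|]; last exact: (sum_Psigma ip_inner skew adj R1 R2 R3 R4 R5).
split; first exact: (Psigma_idem ip_inner skew adj R1 R2 R3 R4 R5).
split; first exact: (Psigma_adj ip_inner skew adj R1 R2 R3 R4 R5).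
by move=> i k x; rewrite (Psigma_U_comm ip_inner skew adj R1 R2 R3 R4 R5)
  (Psigma_Us_comm ip_inner skew adj R1 R2 R3 R4 R5).
Qed.
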